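(* If $S,T\in \mathcal{B}_{A}(\mathcal{H})$, then $$d\omega _{A_{0}}\left( \begin{bmatrix} S & 0 \\ 0 & T \end{bmatrix} \right) =\max \left\{ d\omega _{A}\left( S\right) ,d\omega _{A}\left( T\right) \right\}.$$
   Context: $\mathcal{H}$ is a complex Hilbert space and $A\in\mathcal{B}(\mathcal{H})$ is a positive operator; $\langle x,z\rangle_A=\langle Ax,z\rangle$ and $\|z\|_A=\|A^{1/2}z\|$. $\mathcal{B}_A(\mathcal{H})$ denotes the set of bounded operators $S$ on $\mathcal{H}$ admitting an $A$-adjoint, i.e. with $\mathcal{R}(S^*A)\subseteq\mathcal{R}(A)$. The $A$-Davis-Wielandt radius is $d\omega_A(S)=\sup\{(|\langle Sz,z\rangle_A|^2+\|Sz\|_A^4)^{1/2}: z\in\mathcal{H},\ \|z\|_A=1\}$. $A_0=\begin{bmatrix} A&0\\0&A\end{bmatrix}$ is the positive operator on $\mathcal{H}\oplus\mathcal{H}$, inducing $\langle x,z\rangle_{A_0}=\langle x_1,z_1\rangle_A+\langle x_2,z_2\rangle_A$ for $x=(x_1,x_2)$, $z=(z_1,z_2)$, and $d\omega_{A_0}$ is the corresponding $A_0$-Davis-Wielandt radius on $\mathcal{H}\oplus\mathcal{H}$. *)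

From HB Require Import structures.
From mathcomp Require Import all_boot all_order all_algebra.
From mathcomp Require Import all_classical all_reals.
From mathcomp Require Import complex.
From mathcomp Require Import ereal.

Set Implicit Arguments.
Unset Strict Implicit.
Unset Printing Implicit Defensive.

Import Order.TTheory GRing.Theory Num.Theory.
Local Open Scope ring_scope.
Local Open Scope classical_set_scope.

Definition ipnorm (R : realType) (X : Type) (ip : X -> X -> R[i]) (x : X) : R :=
  Num.sqrt (complex.Re (ip x x)).

Definition is_hilbert (R : realType) (V : lmodType R[i]) (ip : V -> V -> R[i]) : Prop :=
  [/\ (forall (a : R[i]) (x y z : V), ip (a *: x + y) z = a * ip x z + ip y z),
      (forall x y : V, ip y x = (ip x y)^*),
      (forall x : V, 0 <= ip x x),
      (forall x : V, ip x x = 0 -> x = 0) &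
      (forall u : nat -> V,
         (forall e : R, 0 < e -> exists N : nat, forall m n : nat,
             (N <= m)%N -> (N <= n)%N -> ipnorm ip (u m - u n) < e) ->
         exists l : V, forall e : R, 0 < e -> exists N : nat, forall n : nat,
             (N <= n)%N -> ipnorm ip (u n - l) < e)].

Definition bounded_op (R : realType) (V : lmodType R[i]) (ip : V -> V -> R[i])
    (f : V -> V) : Prop :=
  (forall (a : R[i]) (x y : V), f (a *: x + y) = a *: f x + f y) /\
  exists M : R, forall x : V, ipnorm ip (f x) <= M * ipnorm ip x.

Definition positive_op (R : realType) (V : lmodType R[i]) (ip : V -> V -> R[i])
    (A : V -> V) : Prop :=
  bounded_op ip A /\ forall x : V, 0 <= ip (A x) x.

Definition is_adjoint (R : realType) (V : lmodType R[i]) (ip : V -> V -> R[i])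
    (S Sstar : V -> V) : Prop :=
  forall x y : V, ip (S x) y = ip x (Sstar y).

(* S \in B_A(H): S is bounded and R(S^* A) \subseteq R(A). *)
Definition in_BA (R : realType) (V : lmodType R[i]) (ip : V -> V -> R[i])
    (A S : V -> V) : Prop :=
  bounded_op ip S /\
  exists Sstar : V -> V, bounded_op ip Sstar /\ is_adjoint ip S Sstar /\
    forall x : V, exists y : V, Sstar (A x) = A y.

Definition ipA (R : realType) (V : lmodType R[i]) (ip : V -> V -> R[i])
    (A : V -> V) (x z : V) : R[i] := ip (A x) z.

Definition ipA0 (R : realType) (V : lmodType R[i]) (ip : V -> V -> R[i])
    (A : V -> V) (x z : V * V) : R[i] := ipA ip A x.1 z.1 + ipA ip A x.2 z.2.

Definition diag_op (V : Type) (S T : V -> V) (x : V * V) : V * V := (S x.1, T x.2).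

Definition dw_radius (R : realType) (X : Type) (ipX : X -> X -> R[i]) (S : X -> X)
    : \bar R :=
  ereal_sup [set (Num.sqrt (complex.Re `|ipX (S z) z| ^+ 2 + ipnorm ipX (S z) ^+ 4))%:E
            | z in [set z | ipnorm ipX z = 1]].

Definition dwA (R : realType) (V : lmodType R[i]) (ip : V -> V -> R[i])
    (A S : V -> V) : \bar R := dw_radius (ipA ip A) S.

Definition dwA0 (R : realType) (V : lmodType R[i]) (ip : V -> V -> R[i])
    (A : V -> V) (S : V * V -> V * V) : \bar R := dw_radius (ipA0 ip A) S.

From HB Require Import structures.
From mathcomp Require Import all_boot all_order all_algebra.
From mathcomp Require Import all_classical all_reals.
From mathcomp Require Import complex ereal.
From mathcomp Require Import ring lra.

Set Implicit Arguments.
Unset Strict Implicit.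
Unset Printing Implicit Defensive.

Import Order.TTheory GRing.Theory Num.Theory.
Local Open Scope ring_scope.

(* For [z = (x, y)] with [||x||_A^2 + ||y||_A^2 = 1], the Davis-Wielandt value of
   [S (+) T] at [z] is the euclidean norm, in [C x R], of the sum of the vectors
   [(<Sx, x>_A, ||Sx||_A^2)] and [(<Ty, y>_A, ||Ty||_A^2)].  By the triangle
   inequality and homogeneity it is at most
   [||x||_A^2 dw_A(S) + ||y||_A^2 dw_A(T) <= max (dw_A(S), dw_A(T))].
   The A-null vectors need separate care: they are A-orthogonal to everything,
   and an operator with an A-adjoint maps them to A-null vectors.  The reverse
   inequality is witnessed by the vectors [(x, 0)] and [(0, y)]. *)

Lemma linear_fun0 (K : pzRingType) (U W : lmodType K) (f : U -> W) :
  linear f -> f 0 = 0.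
Proof. by move=> f_lin; have := f_lin (-1) 0 0; rewrite scaler0 addr0 scaleN1r addNr. Qed.

Lemma linear_funZ (K : pzRingType) (U W : lmodType K) (f : U -> W) :
  linear f -> forall a x, f (a *: x) = a *: f x.
Proof. by move=> f_lin a x; have := f_lin a x 0; rewrite (linear_fun0 f_lin) !addr0. Qed.

Section ComplexFacts.
Variable R : realType.
Implicit Types (c : R[i]) (a b p : R).

Lemma ge0_ReIm c : 0 <= c -> complex.Im c = 0 /\ 0 <= complex.Re c.
Proof. by rewrite lecE /= => /andP[/eqP <-]. Qed.

Lemma Re_realM a c : complex.Re (a%:C%C * c) = a * complex.Re c.
Proof. by case: c => x y /=; rewrite mul0r subr0. Qed.

Lemma Im_realM a c : complex.Im (a%:C%C * c) = a * complex.Im c.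
Proof. by case: c => x y /=; rewrite mul0r addr0. Qed.

Lemma conj_real a : (a%:C%C : R[i])^* = a%:C%C.
Proof. exact: conjc_real. Qed.

Lemma Re_norm_ge0 c : 0 <= complex.Re `|c|.
Proof. by have [_] := ge0_ReIm (normr_ge0 c). Qed.

Lemma Re_normD c1 c2 :
  complex.Re `|c1 + c2| <= complex.Re `|c1| + complex.Re `|c2|.
Proof. by have := ler_normD c1 c2; rewrite lecE raddfD => /andP[]. Qed.

Lemma quadratic_ge0_lincoef_eq0 a b :
  0 <= a -> (forall t : R, 0 <= t ^+ 2 * a + t * b) -> b = 0.
Proof.
move=> a_ge0 quad_ge0; apply/eqP; apply: contraT => b_neq0.
have a1_gt0 : 0 < a + 1 by lra.
have := quad_ge0 (- b / (a + 1)).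
have -> : (- b / (a + 1)) ^+ 2 * a + (- b / (a + 1)) * b = - (b ^+ 2) / (a + 1) ^+ 2.
  by field; rewrite lt0r_neq0.
rewrite pmulr_lge0 ?invr_gt0 ?exprn_gt0 // oppr_ge0 => b2_le0.
have : 0 < b ^+ 2 by rewrite lt0r sqrf_eq0 b_neq0 sqr_ge0.
lra.
Qed.

End ComplexFacts.

(* The Davis-Wielandt value at [z] is [dw_norm <Sz, z> ||Sz||^2], the euclidean
   norm of a vector of [C x R]. *)
Definition dw_norm (R : realType) (c : R[i]) (p : R) : R :=
  Num.sqrt (complex.Re `|c| ^+ 2 + p ^+ 2).

Section DWNorm.
Variable R : realType.
Implicit Types (c : R[i]) (a p : R).

Lemma dw_normD c1 c2 p1 p2 :
  dw_norm (c1 + c2) (p1 + p2) <= dw_norm c1 p1 + dw_norm c2 p2.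
Proof.
have normE a p : Num.sqrt (a ^+ 2 + p ^+ 2) = complex.Re `|(a +i* p)%C|.
  by rewrite normc_def.
rewrite /dw_norm !normE; apply: le_trans (Re_normD _ _).
rewrite (_ : ((complex.Re `|c1| +i* p1) + (complex.Re `|c2| +i* p2))%C
             = ((complex.Re `|c1| + complex.Re `|c2|) +i* (p1 + p2))%C) // -normE.
rewrite ler_sqrt ?addr_ge0 ?sqr_ge0 // lerD2r.
have := Re_normD c1 c2; have := Re_norm_ge0 (c1 + c2); nra.
Qed.

Lemma dw_normZ a c p : 0 <= a -> dw_norm (a%:C%C * c) (a * p) = a * dw_norm c p.
Proof.
move=> a_ge0; have aC_ge0 : 0 <= a%:C%C :> R[i] by rewrite ler0c.
rewrite /dw_norm normrM (ger0_norm aC_ge0) Re_realM.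
by rewrite !exprMn -mulrDr sqrtrM ?sqr_ge0 // sqrtr_sqr (ger0_norm a_ge0).
Qed.

End DWNorm.

Definition dw_at (R : realType) (X : Type) (B : X -> X -> R[i]) (S : X -> X) (z : X)
    : R :=
  Num.sqrt (complex.Re `|B (S z) z| ^+ 2 + ipnorm B (S z) ^+ 4).

Section DWAt.
Variables (R : realType) (X : Type) (B : X -> X -> R[i]).

Lemma ipnorm_eq1 z : 0 <= complex.Re (B z z) ->
  ipnorm B z = 1 <-> complex.Re (B z z) = 1.
Proof.
rewrite /ipnorm => Bzz_ge0; split => [z1|->]; last exact: sqrtr1.
by rewrite -(sqr_sqrtr Bzz_ge0) z1 expr1n.
Qed.

Lemma dw_atE S z : 0 <= complex.Re (B (S z) (S z)) ->
  dw_at B S z = dw_norm (B (S z) z) (complex.Re (B (S z) (S z))).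
Proof.
move=> BSz_ge0; rewrite /dw_at /dw_norm /ipnorm.
by rewrite (_ : 4 = 2 * 2)%N // exprM sqr_sqrtr.
Qed.

Lemma dw_at_le_radius S u : ipnorm B u = 1 -> ((dw_at B S u)%:E <= dw_radius B S)%E.
Proof. by move=> u1; apply: ereal_sup_ubound; exists u. Qed.

End DWAt.

Definition has_adjoint (R : realType) (X : Type) (B : X -> X -> R[i]) (S : X -> X)
    : Prop :=
  forall w, exists y, forall x, B y x = B w (S x).

Definition dsum_form (R : realType) (X : Type) (B : X -> X -> R[i]) (x z : X * X)
    : R[i] :=
  B x.1 z.1 + B x.2 z.2.

Section SesquilinearForm.
Variables (R : realType) (V : lmodType R[i]) (B : V -> V -> R[i]).
Hypothesis B_linear : forall a x y z, B (a *: x + y) z = a * B x z + B y z.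
Hypothesis B_antilinear : forall a x y z, B z (a *: x + y) = a^* * B z x + B z y.
Hypothesis B_ge0 : forall x, 0 <= B x x.

Lemma form0l z : B 0 z = 0.
Proof. by have := B_linear (-1) 0 0 z; rewrite scaler0 addr0 mulN1r addNr. Qed.

Lemma formZl a x z : B (a *: x) z = a * B x z.
Proof. by have := B_linear a x 0 z; rewrite addr0 form0l addr0. Qed.

Lemma form0r z : B z 0 = 0.
Proof. by have := B_antilinear (-1) 0 0 z; rewrite scaler0 addr0 rmorphN1 mulN1r addNr. Qed.

Lemma formZr a x z : B z (a *: x) = a^* * B z x.
Proof. by have := B_antilinear a x 0 z; rewrite addr0 form0r addr0. Qed.

Lemma formZZ (k : R) x z : B (k%:C%C *: x) (k%:C%C *: z) = (k ^+ 2)%:C%C * B x z.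
Proof. by rewrite formZl formZr conj_real mulrA -rmorphM expr2. Qed.

Lemma form_real_shift (t : R) w x :
  B (t%:C%C *: w + x) (t%:C%C *: w + x)
  = (t ^+ 2)%:C%C * B w w + t%:C%C * (B w x + B x w) + B x x.
Proof. by rewrite B_linear !B_antilinear conj_real rmorphXn; ring. Qed.

Lemma form_null_orth x : B x x = 0 -> forall w, B w x = 0.
Proof.
move=> Bxx0.
have cross w : B w x + B x w = 0.
  have [Im_w Re_w] := ge0_ReIm (B_ge0 w).
  have shift_ge0 t := ge0_ReIm (B_ge0 (t%:C%C *: w + x)).
  apply/eqP; rewrite eq_complex /=; apply/andP; split; apply/eqP.
  - apply: (quadratic_ge0_lincoef_eq0 Re_w) => t.
    have [_] := shift_ge0 t.
    by rewrite form_real_shift Bxx0 addr0 raddfD /= !Re_realM.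
  - have [] := shift_ge0 1.
    by rewrite form_real_shift Bxx0 addr0 raddfD /= !Im_realM Im_w expr1n !mul1r add0r.
(* [cross] at [w] and at ['i w] separates [B w x] from [B x w]. *)
move=> w; have := cross ('i%C *: w); rewrite formZl formZr.
move: (cross w); case: (B w x) => a b; case: (B x w) => c d /=.
move=> /eqP; rewrite eq_complex /= => /andP[/eqP ac /eqP bd].
move=> /eqP; rewrite eq_complex /= => /andP[/eqP h1 /eqP h2].
apply/eqP; rewrite eq_complex /=; apply/andP; split; apply/eqP; nra.
Qed.

Lemma dw_atZ S (k : R) z :
  linear S -> dw_at B S (k%:C%C *: z) = k ^+ 2 * dw_at B S z.
Proof.
move=> S_lin.
have SZ := linear_funZ S_lin k%:C%C z.
have [_ BSz_ge0] := ge0_ReIm (B_ge0 (S z)).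
have Re_ge0 : 0 <= complex.Re (B (S (k%:C%C *: z)) (S (k%:C%C *: z))).
  by rewrite SZ formZZ Re_realM mulr_ge0 ?sqr_ge0.
rewrite !dw_atE // SZ !formZZ Re_realM.
by rewrite dw_normZ ?sqr_ge0.
Qed.

Lemma dw_at_null S z : has_adjoint B S -> B z z = 0 -> dw_at B S z = 0.
Proof.
move=> S_adj Bzz0; have [y Sy] := S_adj (S z).
have BSz0 : B (S z) (S z) = 0 by rewrite -Sy (form_null_orth Bzz0).
rewrite dw_atE ?BSz0 ?(form_null_orth Bzz0) //.
by rewrite /dw_norm normr0 /= expr0n /= addr0 sqrtr0.
Qed.

Lemma dw_at_le_scaled_radius S z : linear S -> has_adjoint B S ->
  ((dw_at B S z)%:E <= (complex.Re (B z z))%:E * dw_radius B S)%E.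
Proof.
move=> S_lin S_adj; have [Im_z Re_z] := ge0_ReIm (B_ge0 z).
set t := complex.Re (B z z) in Re_z *.
have [t0|t_neq0] := eqVneq t 0.
  have Bzz0 : B z z = 0 by apply/eqP; rewrite eq_complex /= -/t t0 Im_z !eqxx.
  (* [mul0e] also covers [dw_radius B S = -oo], when there is no unit vector. *)
  by rewrite dw_at_null // t0 mul0e.
have t_gt0 : 0 < t by rewrite lt_def t_neq0.
set k := (Num.sqrt t)^-1.
have k2t : k ^+ 2 * t = 1 by rewrite exprVn sqr_sqrtr // mulVf.
have u1 : ipnorm B (k%:C%C *: z) = 1.
  have Bu1 : complex.Re (B (k%:C%C *: z) (k%:C%C *: z)) = 1.
    by rewrite formZZ Re_realM -/t k2t.
  by apply/ipnorm_eq1; rewrite Bu1.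
have -> : dw_at B S z = t * dw_at B S (k%:C%C *: z).
  by rewrite dw_atZ // mulrA [t * _]mulrC k2t mul1r.
rewrite EFinM; apply: lee_wpmul2l; first by rewrite lee_fin.
exact: dw_at_le_radius.
Qed.

Lemma dw_at_dsum S T x y :
  dw_at (dsum_form B) (diag_op S T) (x, y) <= dw_at B S x + dw_at B T y.
Proof.
have [_ BSx_ge0] := ge0_ReIm (B_ge0 (S x)).
have [_ BTy_ge0] := ge0_ReIm (B_ge0 (T y)).
rewrite !dw_atE //; last by rewrite /dsum_form raddfD addr_ge0.
by rewrite /dsum_form /diag_op /= raddfD; exact: dw_normD.
Qed.

Lemma dw_radius_dsum_le S T :
  linear S -> linear T -> has_adjoint B S -> has_adjoint B T ->
  (dw_radius (dsum_form B) (diag_op S T)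
   <= Order.max (dw_radius B S) (dw_radius B T))%E.
Proof.
move=> S_lin T_lin S_adj T_adj; apply: ge_ereal_sup => _ [[x y] z1 <-].
have [_ Rex] := ge0_ReIm (B_ge0 x); have [_ Rey] := ge0_ReIm (B_ge0 y).
have {z1} xy1 : complex.Re (B x x) + complex.Re (B y y) = 1.
  by move/ipnorm_eq1: z1; rewrite /dsum_form raddfD /=; apply; rewrite addr_ge0.
set M := Order.max _ _.
apply: (@le_trans _ _ ((dw_at B S x)%:E + (dw_at B T y)%:E)%E).
  by rewrite -EFinD lee_fin dw_at_dsum.
apply: le_trans (leeD (dw_at_le_scaled_radius x S_lin S_adj)
                         (dw_at_le_scaled_radius y T_lin T_adj)) _.
apply: (@le_trans _ _ ((complex.Re (B x x))%:E * M + (complex.Re (B y y))%:E * M)%E).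
  by apply: leeD; apply: lee_wpmul2l; rewrite ?lee_fin // ?le_max lexx ?orbT.
by rewrite -ge0_muleDl ?lee_fin // -EFinD xy1 mul1e.
Qed.

Lemma dw_radius_le_dsum_l S T : T 0 = 0 ->
  (dw_radius B S <= dw_radius (dsum_form B) (diag_op S T))%E.
Proof.
move=> T0; apply: ge_ereal_sup => _ [u u1 <-].
have unit_u : ipnorm (dsum_form B) (u, 0) = 1
  by rewrite -u1 /ipnorm /dsum_form /= form0l addr0.
apply: le_trans (dw_at_le_radius (diag_op S T) unit_u).
by rewrite /dw_at /ipnorm /dsum_form /diag_op /= T0 !form0l !addr0.
Qed.

Lemma dw_radius_le_dsum_r S T : S 0 = 0 ->
  (dw_radius B T <= dw_radius (dsum_form B) (diag_op S T))%E.
Proof.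
move=> S0; apply: ge_ereal_sup => _ [u u1 <-].
have unit_u : ipnorm (dsum_form B) (0, u) = 1
  by rewrite -u1 /ipnorm /dsum_form /= form0l add0r.
apply: le_trans (dw_at_le_radius (diag_op S T) unit_u).
by rewrite /dw_at /ipnorm /dsum_form /diag_op /= S0 !form0l !add0r.
Qed.

Lemma dw_radius_dsum S T :
  linear S -> linear T -> has_adjoint B S -> has_adjoint B T ->
  dw_radius (dsum_form B) (diag_op S T) = Order.max (dw_radius B S) (dw_radius B T).
Proof.
move=> S_lin T_lin S_adj T_adj; apply/eqP; rewrite eq_le ge_max.
rewrite dw_radius_dsum_le //.
by rewrite dw_radius_le_dsum_l ?dw_radius_le_dsum_r ?linear_fun0.
Qed.

End SesquilinearForm.

Section PositiveOperator.
Variables (R : realType) (V : lmodType R[i]) (ip : V -> V -> R[i]) (A : V -> V).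
Hypotheses (ip_hilbert : is_hilbert ip) (A_pos : positive_op ip A).

Lemma ipA_linear a x y z :
  ipA ip A (a *: x + y) z = a * ipA ip A x z + ipA ip A y z.
Proof.
case: ip_hilbert => ip_lin _ _ _ _; case: A_pos => [[A_lin _] _].
by rewrite /ipA A_lin ip_lin.
Qed.

Lemma ipA_antilinear a x y z :
  ipA ip A z (a *: x + y) = a^* * ipA ip A z x + ipA ip A z y.
Proof.
case: ip_hilbert => ip_lin ip_sym _ _ _.
by rewrite /ipA ip_sym (ip_sym x) (ip_sym y) ip_lin rmorphD rmorphM.
Qed.

Lemma ipA_ge0 x : 0 <= ipA ip A x x.
Proof. by case: A_pos => _; apply. Qed.

Lemma in_BA_linear S : in_BA ip A S -> linear S.
Proof. by case=> [[]]. Qed.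

Lemma in_BA_has_adjoint S : in_BA ip A S -> has_adjoint (ipA ip A) S.
Proof.
case: ip_hilbert => _ ip_sym _ _ _ [_ [Ss [_ [S_adj S_range]]]] w.
have [y Ssw] := S_range w; exists y => x.
by rewrite /ipA -Ssw [RHS]ip_sym S_adj -ip_sym.
Qed.

End PositiveOperator.

Theorem proposition3p4 (R : realType) (V : lmodType R[i]) (ip : V -> V -> R[i])
    (A S T : V -> V) :
  is_hilbert ip -> positive_op ip A -> in_BA ip A S -> in_BA ip A T ->
  dwA0 ip A (diag_op S T) = Order.max (dwA ip A S) (dwA ip A T).
Proof.
move=> ip_hilbert A_pos S_BA T_BA.
exact: (dw_radius_dsum (ipA_linear ip_hilbert A_pos) (ipA_antilinear A ip_hilbert)
          (ipA_ge0 A_pos) (in_BA_linear S_BA) (in_BA_linear T_BA)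
          (in_BA_has_adjoint ip_hilbert S_BA) (in_BA_has_adjoint ip_hilbert T_BA)).
Qed.
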